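(* Let $k\ge l\ge0$, $H\in\mathcal{H}_{k,l}(\mathbb{R}^{2m},\mathbb{C})$, and integers $i\ge0$, $0\le j\le k-l$. Then $$C\big(C^iS_u^jH\big)=C^{i+1}S_u^jH,\qquad S_u\big(C^iS_u^jH\big)=\frac{H_x+i+1}{H_x+1}\,C^iS_u^{j+1}H.$$
   Context: Fix an integer $m>4$. For $x,u\in\mathbb{R}^m$ let $\mathcal{P}_{p,q}(\mathbb{R}^{2m},\mathbb{C})$ be complex polynomials of degree $p$ in $x$ and $q$ in $u$. Write $|x|^2=\sum x_j^2$, $\langle u,x\rangle=\sum u_jx_j$, $\Delta_x=\sum\partial_{x_j}^2$, $\Delta_u=\sum\partial_{u_j}^2$, $\langle\partial_u,\partial_x\rangle=\sum\partial_{u_j}\partial_{x_j}$, $\langle x,\partial_u\rangle=\sum x_j\partial_{u_j}$, $\langle u,\partial_x\rangle=\sum u_j\partial_{x_j}$, $\mathbb{E}_x=\sum x_j\partial_{x_j}$, $H_x=-(\mathbb{E}_x+\frac m2)$, $\ker(D_1,\dots,D_r)=\bigcap\ker D_i$. Every $P\in\mathcal{P}_{p,q}$ is uniquely $\sum_{a,b\ge0}|x|^{2a}|u|^{2b}H'_{p-2a,q-2b}$ with $H'_{p-2a,q-2b}\in\mathcal{P}_{p-2a,q-2b}\cap\ker(\Delta_x,\Delta_u)$; $\pi_{\mathfrak{s}}P:=H'_{p,q}$. On $\ker(\Delta_x,\Delta_u)$: $S_u=\pi_{\mathfrak{s}}\langle u,\partial_x\rangle$, $C=\pi_{\mathfrak{s}}\langle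 u,x\rangle$. For $k\ge l\ge0$, $\mathcal{H}_{k,l}=\mathcal{P}_{k,l}\cap\ker(\Delta_x,\Delta_u,\langle\partial_u,\partial_x\rangle,\langle x,\partial_u\rangle)$. Convention: the rational function of $H_x$ written to the left is evaluated at the eigenvalue of $H_x$ on the bihomogeneous polynomial $C^iS_u^{j+1}H$. *)

From mathcomp Require Import all_boot all_order all_algebra.
From mathcomp.multinomials Require Import mpoly.
From Stdlib Require Import ClassicalEpsilon.

Set Implicit Arguments.
Unset Strict Implicit.
Unset Printing Implicit Defensive.

Import Order.TTheory GRing.Theory Num.Theory.
Local Open Scope ring_scope.

(* Polynomials in (x, u) in R^m x R^m, i.e. in 2m variables indexed by
   'I_(m + m): variable (lshift m j) is x_j and (rshift m j) is u_j.
   Coefficients in a field F (numClosedFieldType, e.g. the complex numbers). *)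
Section Ops.
Variables (F : numClosedFieldType) (m : nat).

Definition poly2 := {mpoly F[m + m]}.

Definition xv (j : 'I_m) : poly2 := 'X_(lshift m j).
Definition uv (j : 'I_m) : poly2 := 'X_(rshift m j).
Definition dx (j : 'I_m) (P : poly2) : poly2 := mderiv (lshift m j) P.
Definition du (j : 'I_m) (P : poly2) : poly2 := mderiv (rshift m j) P.

Definition normx2 : poly2 := \sum_(j < m) xv j ^+ 2.
Definition normu2 : poly2 := \sum_(j < m) uv j ^+ 2.
Definition ux : poly2 := \sum_(j < m) uv j * xv j.

Definition Lapx (P : poly2) : poly2 := \sum_(j < m) dx j (dx j P).
Definition Lapu (P : poly2) : poly2 := \sum_(j < m) du j (du j P).
Definition dudx (P : poly2) : poly2 := \sum_(j < m) du j (dx j P).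
Definition xdu (P : poly2) : poly2 := \sum_(j < m) xv j * du j P.
Definition udx (P : poly2) : poly2 := \sum_(j < m) uv j * dx j P.

Definition xdeg (mn : 'X_{1..m + m}) : nat := (\sum_(j < m) mn (lshift m j))%N.
Definition udeg (mn : 'X_{1..m + m}) : nat := (\sum_(j < m) mn (rshift m j))%N.

Definition bihomog (p q : nat) (P : poly2) : bool :=
  all (fun mn => (xdeg mn == p) && (udeg mn == q)) (msupp P).

Definition dharm (P : poly2) : Prop := Lapx P = 0 /\ Lapu P = 0.

Definition Hkl (k l : nat) (H : poly2) : Prop :=
  bihomog k l H /\ Lapx H = 0 /\ Lapu H = 0 /\ dudx H = 0 /\ xdu H = 0.

(* The decomposition P = sum_{a,b} |x|^{2a} |u|^{2b} H'_{a,b} with every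
   H'_{a,b} in ker(Delta_x, Delta_u); pi_s P is the (0,0) component H'_{0,0}.
   (Applied componentwise to the bihomogeneous parts; on P in P_{p,q} this
   is exactly the paper's pi_s, since then H'_{a,b} lies in P_{p-2a,q-2b}.) *)
Definition is_pis (P H : poly2) : Prop :=
  exists (N : nat) (Hf : nat -> nat -> poly2),
    (forall a b, dharm (Hf a b)) /\
    P = \sum_(a < N.+1) \sum_(b < N.+1) normx2 ^+ a * normu2 ^+ b * Hf a b /\
    H = Hf 0%N 0%N.

Definition pis (P : poly2) : poly2 := epsilon (inhabits 0) (is_pis P).

Definition Su (P : poly2) : poly2 := pis (udx P).
Definition Cop (P : poly2) : poly2 := pis (ux * P).

(* eigenvalue of H_x = -(E_x + m/2) on a polynomial of x-degree p *)
Definition Hx_eig (p : int) : F := - (p%:~R + m%:R / 2).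

End Ops.

(* The projection [pis] is characterised on bihomogeneous polynomials by two
   properties: [pis P] is doubly harmonic and [P - pis P] lies in the ideal
   generated by |x|^2 and |u|^2.  Existence comes from the Fischer decomposition
   (peeling off powers of |x|^2, then of |u|^2), uniqueness from the Fischer inner
   product, for which multiplication by |x|^2 is adjoint to Delta_x, so that a
   doubly harmonic element of the ideal is orthogonal to itself.

   For the second, this
   characterisation gives an explicit formula for C on a doubly harmonic Z of
   bidegree (p, q), from which <u, d_x> C Z = (1 - 2/(m + 2p - 2)) <u, x> <u, d_x> Z
   modulo the ideal; hence S_u C Z = (m + 2p - 4)/(m + 2p - 2) C S_u Z.  Along
   C^i S_u^j H the x-degree is k - j + i, so the factors telescope to
   (H_x + i + 1)/(H_x + 1). *)

From HB Require Import structures.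
From mathcomp Require Import all_boot all_order all_algebra ring zify.
From mathcomp.multinomials Require Import mpoly.
From Stdlib Require Import ClassicalEpsilon.

Set Implicit Arguments.
Unset Strict Implicit.
Unset Printing Implicit Defensive.

Import Order.TTheory GRing.Theory Num.Theory.
Local Open Scope ring_scope.

(* A side [s : 'I_m -> 'I_(m + m)] selects m of the 2m variables: [lshift] gives
   x and [rshift] gives u.  Writing x and u for these sides, <u, x> = [dotp u x],
   <u, d_x> = [polar u x], <x, d_u> = [polar x u] and <d_u, d_x> = [dotd u x]. *)
Section SideOperators.
Variables (F : numClosedFieldType) (m : nat).
Local Notation P2 := (poly2 F m).
Implicit Types (P f : P2) (s t : 'I_m -> 'I_(m + m)).

Definition sqnorm s : P2 := \sum_(j < m) 'X_(s j) ^+ 2.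
Definition dotp s t : P2 := \sum_(j < m) 'X_(s j) * 'X_(t j).
Definition polar s t P : P2 := \sum_(j < m) 'X_(s j) * mderiv (t j) P.
Definition dotd s t P : P2 := \sum_(j < m) mderiv (s j) (mderiv (t j) P).

Lemma polar_is_linear s t : linear (polar s t).
Proof.
move=> c p q; rewrite /polar scaler_sumr -big_split; apply: eq_bigr => j _.
by rewrite mderivD mderivZ mulrDr scalerAr.
Qed.
HB.instance Definition _ s t :=
  GRing.isLinear.Build F P2 P2 _ (polar s t) (polar_is_linear s t).

Lemma dotd_is_linear s t : linear (dotd s t).
Proof.
move=> c p q; rewrite /dotd scaler_sumr -big_split; apply: eq_bigr => j _.
by rewrite !mderivD !mderivZ.
Qed.
HB.instance Definition _ s t :=
  GRing.isLinear.Build F P2 P2 _ (dotd s t) (dotd_is_linear s t).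

Lemma dotpC s t : dotp s t = dotp t s.
Proof. by apply: eq_bigr => j _; rewrite mulrC. Qed.

Lemma dotdC s t f : dotd s t f = dotd t s f.
Proof. by apply: eq_bigr => j _; rewrite mderiv_comm. Qed.

(* Stated for ordinal sums: [raddf_sum] would also rewrite the sum that [mderiv]
   itself unfolds to. *)
Lemma mderiv_sum i (G : 'I_m -> P2) :
  mderiv i (\sum_(k < m) G k) = \sum_(k < m) mderiv i (G k).
Proof. exact: raddf_sum. Qed.

Lemma mderiv_nat i k : mderiv i (k%:R : P2) = 0.
Proof. by rewrite -mpolyC_nat mderivC. Qed.

Lemma dotd_comm s t s' t' f : dotd s t (dotd s' t' f) = dotd s' t' (dotd s t f).
Proof.
rewrite /dotd; under eq_bigr do rewrite !mderiv_sum.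
under [RHS]eq_bigr do rewrite !mderiv_sum.
rewrite exchange_big /=; apply: eq_bigr => i _; apply: eq_bigr => j _.
by apply: (mderiv_perm (s1 := [:: s j; t j; s' i; t' i]) (s2 := [:: s' i; t' i; s j; t j]));
  rewrite (perm_catC [:: s j; t j]).
Qed.

Lemma mderiv_var (i k : 'I_(m + m)) : mderiv i ('X_k : P2) = (k == i)%:R.
Proof.
rewrite mderivX mnm1E; case: eqP => [->|_]; last by rewrite scale0r.
by rewrite -{1}(add0m U_(i)%MM) addmK mpolyX0 scale1r.
Qed.

Lemma sum_delta (G : 'I_m -> P2) i : \sum_(j < m) (j == i)%:R * G j = G i.
Proof. by rewrite (bigD1 i) //= eqxx mul1r big1 ?addr0 // => j /negbTE ->; rewrite mul0r. Qed.

End SideOperators.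

Notation lap s := (dotd s s).
Notation euler s := (polar s s).

Section DisjointSides.
Context {F : numClosedFieldType} (m : nat).
Local Notation P2 := (poly2 F m).
Local Notation side := ('I_m -> 'I_(m + m)).

Definition disjoint_sides (s t : side) :=
  [/\ injective s, injective t & forall a b, s a != t b].

Lemma disjoint_sidesC s t : disjoint_sides s t -> disjoint_sides t s.
Proof. by case=> hs ht hst; split=> // a b; rewrite eq_sym. Qed.

Lemma lr_disjoint : disjoint_sides (@lshift m m) (@rshift m m).
Proof. by split; [exact: lshift_inj | exact: rshift_inj | move=> a b; rewrite eq_lrshift]. Qed.

Variables (s t : side) (st : disjoint_sides s t).

Lemma mderivX_side i j : mderiv (s i) ('X_(s j) : P2) = (j == i)%:R.
Proof. by case: st => hs _ _; rewrite mderiv_var (inj_eq hs). Qed.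

Lemma mderivX_cross i j : mderiv (s i) ('X_(t j) : P2) = 0.
Proof. by case: st => _ _ hst; rewrite mderiv_var eq_sym (negbTE (hst _ _)). Qed.

Lemma mderiv_sqnorm i : mderiv (s i) (sqnorm F s) = 'X_(s i) *+ 2.
Proof.
rewrite /sqnorm mderiv_sum.
under eq_bigr do rewrite expr2 mderivM !mderivX_side.
by rewrite big_split /= sum_delta -(sum_delta (fun j => 'X_(s j)) i) mulr2n;
  congr (_ + _); apply: eq_bigr => j _; rewrite mulrC.
Qed.

Lemma mderiv_sqnorm_cross i : mderiv (s i) (sqnorm F t) = 0.
Proof.
rewrite /sqnorm mderiv_sum big1 // => j _.
by rewrite expr2 mderivM !mderivX_cross mulr0 mul0r addr0.
Qed.

Lemma mderiv_dotp i : mderiv (s i) (dotp F t s) = 'X_(t i).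
Proof.
rewrite /dotp mderiv_sum.
under eq_bigr do rewrite mderivM mderivX_side mderivX_cross mul0r add0r.
by rewrite -(sum_delta (fun j => 'X_(t j)) i); apply: eq_bigr => j _; rewrite mulrC.
Qed.

End DisjointSides.

Section CommutationRelations.
Context {F : numClosedFieldType} (m : nat).
Local Notation P2 := (poly2 F m).
Variables (s t : 'I_m -> 'I_(m + m)) (st : disjoint_sides s t).
Let ts := disjoint_sidesC st.
Implicit Types f : P2.

Lemma lap_sqnormM f :
  lap s (sqnorm F s * f) = f *+ (2 * m) + euler s f *+ 4 + sqnorm F s * lap s f.
Proof.
have D i : mderiv (s i) (mderiv (s i) (sqnorm F s * f)) =
    f *+ 2 + ('X_(s i) * mderiv (s i) f) *+ 4 + sqnorm F s * mderiv (s i) (mderiv (s i) f).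
  rewrite !(mderivD, mderivM, mderivMn, mderiv_sqnorm st, mderivX_side st) eqxx /=; ring.
rewrite /dotd /polar (eq_bigr _ (fun i _ => D i)) !big_split /= sumr_const card_ord.
by rewrite mulr_sumr mulnC mulrnA; ring.
Qed.

Lemma lap_sqnormM_cross f : lap s (sqnorm F t * f) = sqnorm F t * lap s f.
Proof.
rewrite /dotd mulr_sumr; apply: eq_bigr => i _.
by rewrite !(mderivD, mderivM, mderiv_sqnorm_cross st, mderiv0, mul0r, add0r).
Qed.

Lemma lap_dotpM f : lap s (dotp F t s * f) = polar t s f *+ 2 + dotp F t s * lap s f.
Proof.
have D i : mderiv (s i) (mderiv (s i) (dotp F t s * f)) =
    ('X_(t i) * mderiv (s i) f) *+ 2 + dotp F t s * mderiv (s i) (mderiv (s i) f).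
  rewrite !(mderivD, mderivM, mderiv_dotp st, mderivX_cross st); ring.
by rewrite /dotd /polar (eq_bigr _ (fun i _ => D i)) big_split /= -sumrMnl mulr_sumr.
Qed.

Lemma lap_polar f : lap s (polar t s f) = polar t s (lap s f).
Proof.
rewrite /dotd /polar; under eq_bigr do rewrite !mderiv_sum.
under [RHS]eq_bigr do rewrite mderiv_sum mulr_sumr.
rewrite exchange_big /=; apply: eq_bigr => j _; apply: eq_bigr => i _.
rewrite !(mderivD, mderivM, mderivX_cross st, mderiv0, mul0r, add0r); congr (_ * _).
by apply: (mderiv_perm (s1 := [:: s i; s i; s j]) (s2 := [:: s j; s i; s i]));
  rewrite (perm_catC [:: s i; s i]).
Qed.

Lemma lap_polar_cross f : lap t (polar t s f) = dotd t s f *+ 2 + polar t s (lap t f).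
Proof.
have D j : lap t ('X_(t j) * mderiv (s j) f) =
    mderiv (t j) (mderiv (s j) f) *+ 2 + 'X_(t j) * mderiv (s j) (lap t f).
  rewrite /dotd; under eq_bigr do
    rewrite !(mderivD, mderivM, mderivX_side ts, mderiv_nat, mul0r, add0r) (eq_sym j).
  rewrite !big_split /= !sum_delta mderiv_sum mulr_sumr mulr2n addrA; congr (_ + _).
  apply: eq_bigr => i _; congr (_ * _).
  by apply: (mderiv_perm (s1 := [:: t i; t i; s j]) (s2 := [:: s j; t i; t i]));
    rewrite (perm_catC [:: t i; t i]).
by rewrite {1}/polar raddf_sum (eq_bigr _ (fun j _ => D j)) big_split /= -sumrMnl.
Qed.

Lemma polar_dotpM f : polar t s (dotp F t s * f) = sqnorm F t * f + dotp F t s * polar t s f.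
Proof.
rewrite /polar; under eq_bigr do rewrite mderivM (mderiv_dotp st) mulrDr.
rewrite big_split /= mulr_sumr /sqnorm mulr_suml; congr (_ + _); apply: eq_bigr => j _; ring.
Qed.

Lemma polar_sqnormM f :
  polar t s (sqnorm F s * f) = (dotp F t s * f) *+ 2 + sqnorm F s * polar t s f.
Proof.
rewrite /polar; under eq_bigr do rewrite mderivM (mderiv_sqnorm st) mulrDr.
rewrite big_split /= mulr_sumr /dotp mulr_suml -sumrMnl.
by congr (_ + _); apply: eq_bigr => j _; ring.
Qed.

Lemma polar_sqnormM_cross f : polar t s (sqnorm F t * f) = sqnorm F t * polar t s f.
Proof.
rewrite /polar mulr_sumr; apply: eq_bigr => j _.
by rewrite mderivM (mderiv_sqnorm_cross st) mul0r add0r; ring.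
Qed.

End CommutationRelations.

Section SideHomogeneity.
Context {F : numClosedFieldType} (m : nat).
Local Notation P2 := (poly2 F m).
Implicit Types (P Q : P2) (s t : 'I_m -> 'I_(m + m)).

Definition sdeg s (mn : 'X_{1..m + m}) : nat := (\sum_(j < m) mn (s j))%N.
Definition shomog s (d : nat) P : bool := all (fun mn => sdeg s mn == d) (msupp P).

Lemma shomogP s d P :
  reflect (forall mn, mn \in msupp P -> sdeg s mn = d) (shomog s d P).
Proof. by apply: (iffP allP) => H mn /H /eqP. Qed.

Lemma shomog0 s d : shomog s d (0 : P2).
Proof. by apply/shomogP => mn; rewrite mcoeff_msupp mcoeff0 eqxx. Qed.

Lemma shomogD s d P Q : shomog s d P -> shomog s d Q -> shomog s d (P + Q).
Proof.
move=> /shomogP hP /shomogP hQ; apply/shomogP => mn /msuppD_le.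
by rewrite mem_cat => /orP [/hP|/hQ].
Qed.

Lemma shomogZ s d c P : shomog s d P -> shomog s d (c *: P).
Proof. by move=> /shomogP hP; apply/shomogP => mn /msuppZ_le /hP. Qed.

Lemma shomogB s d P Q : shomog s d P -> shomog s d Q -> shomog s d (P - Q).
Proof. by move=> hP hQ; apply: shomogD => //; rewrite -scaleN1r shomogZ. Qed.

Lemma shomog_sum s d (I : Type) (r : seq I) (Pr : pred I) (G : I -> P2) :
  (forall i, Pr i -> shomog s d (G i)) -> shomog s d (\sum_(i <- r | Pr i) G i).
Proof. by move=> h; apply: (big_ind (shomog s d)) => //; [exact: shomog0 | exact: shomogD]. Qed.

Lemma sdegD s m1 m2 : sdeg s (m1 + m2)%MM = (sdeg s m1 + sdeg s m2)%N.
Proof. by rewrite /sdeg -big_split; apply: eq_bigr => j _; rewrite mnmDE. Qed.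

Lemma shomogM s d1 d2 P Q :
  shomog s d1 P -> shomog s d2 Q -> shomog s (d1 + d2) (P * Q).
Proof.
move=> /shomogP hP /shomogP hQ; apply/shomogP => mn.
by case/msuppM_le/allpairsP => -[m1 m2] /= [/hP <- /hQ <- ->]; rewrite sdegD.
Qed.

Lemma shomogX s mn : shomog s (sdeg s mn) ('X_[mn] : P2).
Proof. by apply/shomogP => k; rewrite msuppX mem_seq1 => /eqP ->. Qed.

Lemma shomog1 s : shomog s 0 (1 : P2).
Proof.
have -> : 0%N = sdeg s 0%MM by rewrite /sdeg big1 // => j _; rewrite mnm0E.
by rewrite -mpolyX0 shomogX.
Qed.

Lemma shomogXn s d P n : shomog s d P -> shomog s (d * n) (P ^+ n).
Proof.
move=> h; elim: n => [|n ih]; first by rewrite muln0 expr0 shomog1.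
by rewrite exprS mulnS shomogM.
Qed.

Lemma mderiv_msupp (i : 'I_(m + m)) P mn :
  mn \in msupp (mderiv i P) -> (mn + U_(i))%MM \in msupp P.
Proof. by rewrite !mcoeff_msupp mcoeff_deriv; apply: contra => /eqP ->; rewrite mul0rn. Qed.

Lemma euler_X s mn : euler s ('X_[mn] : P2) = 'X_[mn] *+ sdeg s mn.
Proof.
rewrite /polar /sdeg -sumrMnr; apply: eq_bigr => j _.
rewrite mderivX -scalerAr scaler_nat.
have [->|hp] := posnP (mn (s j)); first by rewrite !mulr0n.
congr (_ *+ _); rewrite -mpolyXD addmC submK //; apply/mnm_lepP => k.
by rewrite mnm1E; case: eqP => [<-|].
Qed.

Lemma euler_shomog s d P : shomog s d P -> euler s P = P *+ d.
Proof.
move=> /shomogP h; rewrite {1 2}(mpolyE P) linear_sum -sumrMnl big_seq [RHS]big_seq.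
by apply: eq_bigr => mn hmn; rewrite linearZ /= euler_X (h _ hmn) scalerMnr.
Qed.

End SideHomogeneity.

Section SidePairHomogeneity.
Context {F : numClosedFieldType} (m : nat).
Local Notation P2 := (poly2 F m).
Variables (s t : 'I_m -> 'I_(m + m)) (st : disjoint_sides s t).
Implicit Types P : P2.

Lemma sdegU_side i : sdeg s U_(s i)%MM = 1%N.
Proof.
case: st => hs _ _; rewrite /sdeg (bigD1 i) //= mnm1E eqxx big1 // => j.
by rewrite mnm1E (inj_eq hs) eq_sym => /negbTE ->.
Qed.

Lemma sdegU_cross i : sdeg s U_(t i)%MM = 0%N.
Proof.
by case: st => _ _ hst; rewrite /sdeg big1 // => j _; rewrite mnm1E eq_sym (negbTE (hst _ _)).
Qed.

Lemma shomogX_side i : shomog s 1 ('X_(s i) : P2).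
Proof. by rewrite -(sdegU_side i) shomogX. Qed.

Lemma shomogX_cross i : shomog s 0 ('X_(t i) : P2).
Proof. by rewrite -(sdegU_cross i) shomogX. Qed.

Lemma shomog_mderiv d P i : shomog s d P -> shomog s d.-1 (mderiv (s i) P).
Proof.
move=> /shomogP h; apply/shomogP => mn /mderiv_msupp /h.
by rewrite sdegD sdegU_side addn1 => <-.
Qed.

Lemma mderiv_shomog0 P i : shomog s 0 P -> mderiv (s i) P = 0.
Proof.
move=> /shomogP h; apply/msuppnil0; case E: (msupp _) => [//|mn r].
have /mderiv_msupp /h : mn \in msupp (mderiv (s i) P) by rewrite E mem_head.
by rewrite sdegD sdegU_side addn1.
Qed.

Lemma shomog_mderiv_cross d P i : shomog s d P -> shomog s d (mderiv (t i) P).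
Proof.
move=> /shomogP h; apply/shomogP => mn /mderiv_msupp /h.
by rewrite sdegD sdegU_cross addn0.
Qed.

Lemma shomog_sqnorm : shomog s 2 (sqnorm F s).
Proof. by apply: shomog_sum => j _; rewrite -[2%N]/(1 * 2)%N shomogXn ?shomogX_side. Qed.

Lemma shomog_sqnorm_cross : shomog s 0 (sqnorm F t).
Proof. by apply: shomog_sum => j _; rewrite -[0%N]/(0 * 2)%N shomogXn ?shomogX_cross. Qed.

Lemma shomog_lap d P : shomog s d P -> shomog s d.-2 (lap s P).
Proof. by move=> h; apply: shomog_sum => j _; rewrite !shomog_mderiv. Qed.

Lemma shomog_lap_cross d P : shomog s d P -> shomog s d (lap t P).
Proof. by move=> h; apply: shomog_sum => j _; rewrite !shomog_mderiv_cross. Qed.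

Lemma lap_shomog_lt2 d P : (d < 2)%N -> shomog s d P -> lap s P = 0.
Proof.
case: d => [|[|//]] _ h; rewrite /dotd big1 // => j _.
  by rewrite (mderiv_shomog0 _ h) mderiv0.
by rewrite mderiv_shomog0 // (shomog_mderiv (d := 1)).
Qed.

Lemma shomog_dotp : shomog s 1 (dotp F s t).
Proof.
by apply: shomog_sum => j _; rewrite -[1%N]/(1 + 0)%N shomogM ?shomogX_side ?shomogX_cross.
Qed.

Lemma shomog_polar d P : shomog s d P -> shomog s d.-1 (polar t s P).
Proof.
by move=> h; apply: shomog_sum => j _; rewrite -[d.-1]add0n shomogM ?shomogX_cross ?shomog_mderiv.
Qed.

Lemma polar_shomog0 P : shomog s 0 P -> polar t s P = 0.
Proof. by move=> h; rewrite /polar big1 // => j _; rewrite mderiv_shomog0 ?mulr0. Qed.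

Lemma shomog_polar_cross d P : shomog s d P -> shomog s d.+1 (polar s t P).
Proof.
by move=> h; apply: shomog_sum => j _; rewrite -add1n shomogM ?shomogX_side ?shomog_mderiv_cross.
Qed.

Lemma shomog_dotd d P : shomog s d P -> shomog s d.-1 (dotd t s P).
Proof. by move=> h; apply: shomog_sum => j _; rewrite shomog_mderiv_cross ?shomog_mderiv. Qed.

Lemma dotd_shomog0 P : shomog s 0 P -> dotd t s P = 0.
Proof. by move=> h; rewrite /dotd big1 // => j _; rewrite mderiv_shomog0 ?mderiv0. Qed.

End SidePairHomogeneity.

Lemma sum_ord_widen (R : nmodType) (G : nat -> R) n1 n2 : (n1 <= n2)%N ->
  (forall a, (n1 <= a)%N -> (a < n2)%N -> G a = 0) ->
  \sum_(a < n2) G a = \sum_(a < n1) G a.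
Proof.
move=> h hz; rewrite -!(big_mkord xpredT) (big_cat_nat (leq0n n1) h) /=.
rewrite [X in _ + X]big1_seq ?addr0 // => a /andP[_].
by rewrite mem_index_iota => /andP[h1 h2]; exact: hz.
Qed.

Section FischerDecomposition.
Context {F : numClosedFieldType} (m : nat).
Local Notation P2 := (poly2 F m).
Variables (s t : 'I_m -> 'I_(m + m)) (st : disjoint_sides s t).
Let ts := disjoint_sidesC st.
Implicit Types (P f g : P2).

Definition lap_coef (b e : nat) : nat := (2 * b.+1 * (2 * b + 2 * e + m))%N.

Lemma lap_sqnormXM b e g : lap s g = 0 -> shomog s e g ->
  lap s (sqnorm F s ^+ b.+1 * g) = (sqnorm F s ^+ b * g) *+ lap_coef b e.
Proof.
move=> hL he; elim: b => [|b ih].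
  rewrite expr1 expr0 mul1r (lap_sqnormM st) (euler_shomog he) hL mulr0 addr0.
  by rewrite -mulrnA -mulrnDr /lap_coef; congr (_ *+ _); ring.
have hg : shomog s (2 * b.+1 + e) (sqnorm F s ^+ b.+1 * g).
  by rewrite shomogM // shomogXn // (shomog_sqnorm st).
rewrite exprS -mulrA (lap_sqnormM st) ih (euler_shomog hg) -mulrnA mulrnAr mulrA -exprS.
by rewrite -!mulrnDr /lap_coef; congr (_ *+ _); ring.
Qed.

Lemma lap_sqnormXM_cross a f : lap t (sqnorm F s ^+ a * f) = sqnorm F s ^+ a * lap t f.
Proof.
elim: a => [|a ih]; first by rewrite !expr0 !mul1r.
by rewrite exprS -mulrA (lap_sqnormM_cross ts) ih mulrA.
Qed.

Hypothesis m_gt0 : (0 < m)%N.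

Lemma fischer_decomposition p P : shomog s p P -> exists h : nat -> P2,
  [/\ forall a, lap s (h a) = 0,
      forall a, shomog s (p - 2 * a) (h a),
      forall a, (p < 2 * a)%N -> h a = 0,
      forall q, shomog t q P -> forall a, shomog t q (h a)
    & lap t P = 0 -> forall a, lap t (h a) = 0]
  /\ P = \sum_(a < p.+1) sqnorm F s ^+ a * h a.
Proof.
elim/ltn_ind: p P => p IH P hP.
have [hL|hL] := eqVneq (lap s P) 0.
  exists (fun a => if a == 0%N then P else 0); split; first split.
  - by case=> [|a] //=; rewrite raddf0.
  - by case=> [|a] /=; rewrite ?muln0 ?subn0 ?shomog0.
  - by case.
  - by move=> q hq [|a] //=; exact: shomog0.
  - by move=> ht0 [|a] //=; rewrite raddf0.
  - by rewrite big_ord_recl /= expr0 mul1r big1 ?addr0 // => a _; rewrite mulr0.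
have p_ge2 : (2 <= p)%N.
  by rewrite leqNgt; apply/negP => hp; move: hL; rewrite (lap_shomog_lt2 st hp hP) eqxx.
have hQ : shomog s (p - 2) (lap s P) by rewrite subn2 (shomog_lap st).
have [g [[g1 g2 g3 g4 g5] g6]] := IH (p - 2)%N ltac:(lia) (lap s P) hQ.
pose c b : F := (lap_coef b (p - 2 - 2 * b))%:R.
have c_neq0 b : c b != 0.
  by rewrite pnatr_eq0 -lt0n /lap_coef !muln_gt0 /= !addn_gt0 m_gt0 !orbT.
pose h a := if a is a'.+1 then (c a')^-1 *: g a'
  else P - \sum_(b < (p - 2).+1) sqnorm F s ^+ b.+1 * ((c b)^-1 *: g b).
have lap_tail b : lap s (sqnorm F s ^+ b.+1 * ((c b)^-1 *: g b)) = sqnorm F s ^+ b * g b.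
  rewrite -scalerAr linearZ /= (lap_sqnormXM b (g1 b) (g2 b)) -scaler_nat scalerA.
  by rewrite mulVf // scale1r.
exists h; split; first split.
- case=> [|a] /=; last by rewrite linearZ /= g1 scaler0.
  rewrite raddfB (raddf_sum (lap s)) /=; under eq_bigr do rewrite lap_tail.
  by rewrite -g6 subrr.
- case=> [|a] /=; last by apply: shomogZ; have := g2 a; congr shomog; lia.
  rewrite muln0 subn0; apply: shomogB => //; apply: shomog_sum => b _.
  have [hb|hb] := leqP (2 * b) (p - 2); last by rewrite (g3 b hb) scaler0 mulr0 shomog0.
  have := shomogM (shomogXn b.+1 (shomog_sqnorm st)) (shomogZ (c b)^-1 (g2 b)).
  by congr shomog; lia.
- by case=> [|a] //= hpa; rewrite g3 ?scaler0 //; lia.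
- move=> q hq [|a] /=; last by apply/shomogZ/g4/(shomog_lap_cross ts).
  apply: shomogB => //; apply: shomog_sum => b _.
  rewrite -[q]add0n shomogM ?shomogZ ?g4 ?(shomog_lap_cross ts) //.
  by rewrite -[0%N]/(0 * b.+1)%N shomogXn // (shomog_sqnorm_cross ts).
- move=> ht0; have gL b : lap t (g b) = 0 by apply: g5; rewrite dotd_comm ht0 raddf0.
  case=> [|a] /=; last by rewrite linearZ /= gL scaler0.
  rewrite raddfB (raddf_sum (lap t)) /= ht0 sub0r big1 ?oppr0 // => b _.
  by rewrite -scalerAr linearZ /= lap_sqnormXM_cross gL mulr0 scaler0.
- rewrite big_ord_recl expr0 mul1r (sum_ord_widen (G := fun b => sqnorm F s ^+ b.+1 * h b.+1)
    (n1 := (p - 2).+1)) /= ?subrK //; first lia.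
  by move=> a ha _ /=; rewrite g3 ?scaler0 ?mulr0 //; lia.
Qed.

End FischerDecomposition.

Section FischerProduct.
Context {F : numClosedFieldType} (m : nat).
Local Notation P2 := (poly2 F m).
Implicit Types (P Q A B H : P2).

(* The Fischer inner product; the weights [mfact] make multiplication by ['X_i]
   adjoint to [mderiv i]. *)
Definition mfact (mn : 'X_{1..m + m}) : nat := (\prod_(i < m + m) (mn i)`!)%N.
Definition fdot_term P Q mn : F := P@_mn * (Q@_mn)^* * (mfact mn)%:R.
Definition fdot P Q : F := \sum_(mn <- msupp P) fdot_term P Q mn.

Lemma fdotE (r : seq 'X_{1..m + m}) P Q : uniq r -> {subset msupp P <= r} ->
  fdot P Q = \sum_(mn <- r) fdot_term P Q mn.
Proof.
move=> ur hsub; rewrite /fdot [RHS](bigID (mem (msupp P))) /=.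
rewrite [X in _ + X]big1 ?addr0; last first.
  by move=> mn /memN_msupp_eq0; rewrite /fdot_term => ->; rewrite !mul0r.
rewrite -[RHS]big_filter; apply/perm_big/uniq_perm; rewrite ?msupp_uniq ?filter_uniq //.
by move=> mn; rewrite mem_filter andb_idr // => /hsub.
Qed.

Lemma fdot0 Q : fdot 0 Q = 0.
Proof. by rewrite (@fdotE [::]) ?big_nil // => mn; rewrite mcoeff_msupp mcoeff0 eqxx. Qed.

Lemma fdotD P P' Q : fdot (P + P') Q = fdot P Q + fdot P' Q.
Proof.
pose r := undup (msupp P ++ msupp P' ++ msupp (P + P')).
have sub S : S \in [:: P; P'; P + P'] -> {subset msupp S <= r}.
  by rewrite !inE => /or3P [] /eqP -> mn h; rewrite mem_undup !mem_cat h ?orbT.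
rewrite !(@fdotE r) ?undup_uniq //; try by apply: sub; rewrite !inE eqxx ?orbT.
by rewrite -big_split; apply: eq_bigr => mn _; rewrite /fdot_term mcoeffD !mulrDl.
Qed.

Lemma fdot_suml (I : Type) (r : seq I) (Pr : pred I) (G : I -> P2) Q :
  fdot (\sum_(i <- r | Pr i) G i) Q = \sum_(i <- r | Pr i) fdot (G i) Q.
Proof. exact: (big_morph (fdot^~ Q) (fun x y => fdotD x y Q) (fdot0 Q)). Qed.

Lemma fdot0r P : fdot P 0 = 0.
Proof. by rewrite /fdot big1 // => mn _; rewrite /fdot_term mcoeff0 rmorph0 mulr0 mul0r. Qed.

Lemma fdotDr P Q Q' : fdot P (Q + Q') = fdot P Q + fdot P Q'.
Proof.
rewrite /fdot -big_split; apply: eq_bigr => mn _.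
by rewrite /fdot_term mcoeffD rmorphD mulrDr mulrDl.
Qed.

Lemma fdot_sumr (I : Type) (r : seq I) (Pr : pred I) (G : I -> P2) P :
  fdot P (\sum_(i <- r | Pr i) G i) = \sum_(i <- r | Pr i) fdot P (G i).
Proof. exact: (big_morph (fdot P) (fdotDr P) (fdot0r P)). Qed.

Lemma mfactU (i : 'I_(m + m)) mn : mfact (U_(i) + mn)%MM = ((mn i).+1 * mfact mn)%N.
Proof.
rewrite /mfact (bigD1 i) //= [in RHS](bigD1 i) //= mnmDE mnm1E eqxx add1n factS mulnA.
by congr (_ * _)%N; apply: eq_bigr => j hj; rewrite mnmDE mnm1E eq_sym (negbTE hj).
Qed.

Lemma fdotMX P Q (i : 'I_(m + m)) : fdot (P * 'X_i) Q = fdot P (mderiv i Q).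
Proof.
rewrite /fdot (perm_big _ (msuppMX P U_(i))) big_map; apply: eq_bigr => mn _.
rewrite /fdot_term mcoeffMX mcoeff_deriv rmorphMn mfactU addmC -mulr_natr natrM; ring.
Qed.

Lemma fdot_sqnormM (s : 'I_m -> 'I_(m + m)) A H : fdot (sqnorm F s * A) H = fdot A (lap s H).
Proof.
rewrite /sqnorm mulr_suml fdot_suml /dotd fdot_sumr; apply: eq_bigr => j _.
by rewrite expr2 mulrC mulrA !fdotMX.
Qed.

Lemma mfact_gt0 mn : (0 < mfact mn)%N.
Proof. by apply/prodn_gt0 => i; apply: fact_gt0. Qed.

Lemma fdot_eq0 H : fdot H H = 0 -> H = 0.
Proof.
move=> /eqP; rewrite /fdot psumr_eq0 => [/allP h0|mn _]; last first.
  by rewrite mulr_ge0 ?mul_conjC_ge0 ?ler0n.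
apply/msuppnil0; case E: (msupp H) => [//|mn r].
have hmn : mn \in msupp H by rewrite E mem_head.
move: (h0 mn hmn); rewrite mcoeff_msupp in hmn.
by rewrite /fdot_term mulf_eq0 mul_conjC_eq0 pnatr_eq0 (negbTE hmn) eqn0Ngt mfact_gt0.
Qed.

Lemma harmonic_sqnorm_ideal_eq0 (s t : 'I_m -> 'I_(m + m)) H A B :
  lap s H = 0 -> lap t H = 0 -> H = sqnorm F s * A + sqnorm F t * B -> H = 0.
Proof.
move=> hs ht hE; apply: fdot_eq0.
by rewrite {1}hE fdotD !fdot_sqnormM hs ht !fdot0r addr0.
Qed.

End FischerProduct.

Section Projection.
Context {F : numClosedFieldType} (m : nat).
Local Notation P2 := (poly2 F m).
Local Notation xs := (@lshift m m).
Local Notation us := (@rshift m m).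
Let xu_disj := @lr_disjoint m.
Let ux_disj := disjoint_sidesC xu_disj.
Implicit Types (P Q A B H : P2).

Lemma bihomogE p q P : bihomog p q P = shomog xs p P && shomog us q P.
Proof. by rewrite /bihomog -all_predI. Qed.

Lemma dharmP H : dharm H <-> lap xs H = 0 /\ lap us H = 0.
Proof. by []. Qed.

Definition sqnorm_ideal P := exists A B, P = sqnorm F xs * A + sqnorm F us * B.

Lemma sqnorm_ideal0 : sqnorm_ideal 0.
Proof. by exists 0, 0; rewrite !mulr0 addr0. Qed.

Lemma sqnorm_idealD P Q : sqnorm_ideal P -> sqnorm_ideal Q -> sqnorm_ideal (P + Q).
Proof. by move=> [A [B ->]] [A' [B' ->]]; exists (A + A'), (B + B'); ring. Qed.

Lemma sqnorm_idealM Q P : sqnorm_ideal P -> sqnorm_ideal (Q * P).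
Proof. by move=> [A [B ->]]; exists (Q * A), (Q * B); ring. Qed.

Lemma sqnorm_idealB P Q : sqnorm_ideal P -> sqnorm_ideal Q -> sqnorm_ideal (P - Q).
Proof. by move=> hP hQ; rewrite -mulN1r; apply/sqnorm_idealD/sqnorm_idealM. Qed.

Lemma sqnorm_idealZ c P : sqnorm_ideal P -> sqnorm_ideal (c *: P).
Proof. by rewrite -mul_mpolyC; apply: sqnorm_idealM. Qed.

Lemma sqnorm_ideal_x A : sqnorm_ideal (sqnorm F xs * A).
Proof. by exists A, 0; rewrite mulr0 addr0. Qed.

Lemma sqnorm_ideal_u B : sqnorm_ideal (sqnorm F us * B).
Proof. by exists 0, B; rewrite mulr0 add0r. Qed.

Lemma sqnorm_ideal_sum (I : Type) (r : seq I) (Pr : pred I) (G : I -> P2) :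
  (forall i, Pr i -> sqnorm_ideal (G i)) -> sqnorm_ideal (\sum_(i <- r | Pr i) G i).
Proof. by move=> h; apply: big_ind => //; [exact: sqnorm_ideal0 | exact: sqnorm_idealD]. Qed.

Lemma is_pis_ideal P H : is_pis P H -> dharm H /\ sqnorm_ideal (P - H).
Proof.
move=> [N [Hf [hd [-> ->]]]]; split; first exact: hd.
rewrite big_ord_recl big_ord_recl /= !expr0 !mul1r [Hf _ _ + _]addrC addrAC addrK.
apply: sqnorm_idealD; apply: sqnorm_ideal_sum => b _.
  by rewrite mul1r /bump /= add1n exprS -mulrA; apply: sqnorm_ideal_u.
apply: sqnorm_ideal_sum => c _.
by rewrite /bump /= add1n exprS -!mulrA; apply: sqnorm_ideal_x.
Qed.

Hypothesis m_gt0 : (0 < m)%N.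

Lemma is_pis_exists p q P : shomog xs p P -> shomog us q P ->
  exists2 H, is_pis P H & shomog xs p H && shomog us q H.
Proof.
move=> hp hq; have [h [[h1 h2 h3 h4 h5] hP]] := fischer_decomposition xu_disj m_gt0 hp.
have hg a := fischer_decomposition ux_disj m_gt0 (h4 q hq a).
have [g hG] := ClassicalEpsilon.choice _ hg.
exists (g 0%N 0%N).
  exists (p + q)%N, (fun a b => if (a <= p)%N then g a b else 0); split => //.
    move=> a b; case: ifP => _; last by split; apply: (raddf0 (lap _)).
    by have [[g1 _ _ _ g5] _] := hG a; split; [exact: g5 | exact: g1].
  split=> //; rewrite {1}hP (sum_ord_widen (n1 := p.+1)
    (G := fun a => \sum_(b < (p + q).+1) sqnorm F xs ^+ a * sqnorm F us ^+ b *
                     (if (a <= p)%N then g a b else 0))); [|lia|]; last first.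
    by move=> a ha _; rewrite big1 // => b _; rewrite leqNgt ha mulr0.
  apply: eq_bigr => -[a /= ha] _; rewrite ltnS in ha; rewrite ha.
  have [[_ _ g3 _ _] ->] := hG a; rewrite mulr_sumr.
  rewrite (sum_ord_widen (n1 := q.+1)
    (G := fun b => sqnorm F xs ^+ a * sqnorm F us ^+ b * g a b)); [|lia|]; last first.
    by move=> b hb _; rewrite g3 ?mulr0 //; lia.
  by apply: eq_bigr => b _; rewrite mulrA.
have [[_ g2 _ g4 _] _] := hG 0%N.
apply/andP; split; last by have := g2 0%N; rewrite muln0 subn0.
by apply: g4; have := h2 0%N; rewrite muln0 subn0.
Qed.

Lemma pis_unique p q P H : shomog xs p P -> shomog us q P -> dharm H ->
  sqnorm_ideal (P - H) -> pis P = H.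
Proof.
move=> hp hq /dharmP[hHx hHu] hI; have [H0 hH0 _] := is_pis_exists hp hq.
have [/dharmP[hpx hpu] hIp] := is_pis_ideal (epsilon_spec (inhabits 0) _ (ex_intro _ H0 hH0)).
have [A [B E]] : sqnorm_ideal (H - pis P).
  by rewrite -(subrKA P) addrC -opprB; apply: sqnorm_idealB.
apply/eqP; rewrite eq_sym -subr_eq0; apply/eqP.
by apply: (harmonic_sqnorm_ideal_eq0 _ _ E); rewrite raddfB /= ?hHx ?hHu ?hpx ?hpu subrr.
Qed.

Lemma pis_spec p q P : shomog xs p P -> shomog us q P ->
  [/\ dharm (pis P), shomog xs p (pis P), shomog us q (pis P) & sqnorm_ideal (P - pis P)].
Proof.
move=> hp hq; have [H0 hH0 /andP[h0p h0q]] := is_pis_exists hp hq.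
have [hd hI] := is_pis_ideal hH0.
by rewrite (pis_unique hp hq hd hI).
Qed.

End Projection.

Section CExpansion.
Context {F : numClosedFieldType} (m : nat).
Local Notation P2 := (poly2 F m).
Hypothesis m_gt2 : (2 < m)%N.

(* Computed in nat; the subtraction is exact since [2 < m], also for [p = 0]. *)
Definition harm_den (p : nat) : F := (m + 2 * p - 2)%N%:R.

Lemma harm_den_neq0 p : harm_den p != 0.
Proof. by rewrite pnatr_eq0; apply/eqP; lia. Qed.

Lemma harm_denK p (Y : P2) : (harm_den p)^-1%:MP * (Y *+ (2 * (m + 2 * p - 2))) = Y *+ 2.
Proof.
by rewrite mul_mpolyC mulrnA -scaler_nat scalerA mulVf ?harm_den_neq0 // scale1r.
Qed.

Variables (s t : 'I_m -> 'I_(m + m)) (st : disjoint_sides s t).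
Let ts := disjoint_sidesC st.
Implicit Types Y Z : P2.

Lemma lap_sqnormM_harmonic p Y : shomog s p.-1 Y -> (p = 0%N -> Y = 0) ->
  lap s Y = 0 -> lap s (sqnorm F s * Y) = Y *+ (2 * (m + 2 * p - 2)).
Proof.
case: p => [_ /(_ erefl) -> _|p h _ hL]; first by rewrite mulr0 raddf0 mul0rn.
rewrite (lap_sqnormM st) (euler_shomog h) hL mulr0 addr0 -mulrnA -mulrnDr.
by congr (_ *+ _); lia.
Qed.

(* [Cop Z] for doubly harmonic [Z] of s-degree [p] and t-degree [q] (see [CopE]). *)
Definition cop_expansion p q Z : P2 :=
  dotp F t s * Z
  - (harm_den p)^-1%:MP * (sqnorm F s * polar t s Z)
  - (harm_den q)^-1%:MP * (sqnorm F t * polar s t Z)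
  + (harm_den p)^-1%:MP * ((harm_den q)^-1%:MP * (sqnorm F s * sqnorm F t * dotd t s Z)).

Lemma lap_cop_expansion p q Z : shomog s p Z -> lap s Z = 0 ->
  lap s (cop_expansion p q Z) = 0.
Proof.
move=> hZ hL.
have L1 : lap s (dotp F t s * Z) = polar t s Z *+ 2.
  by rewrite (lap_dotpM st) hL mulr0 addr0.
have L2 : lap s (sqnorm F s * polar t s Z) = polar t s Z *+ (2 * (m + 2 * p - 2)).
  apply: lap_sqnormM_harmonic; first exact: shomog_polar.
    by move=> p0; apply: (polar_shomog0 st); rewrite -p0.
  by rewrite (lap_polar st) hL raddf0.
have L3 : lap s (sqnorm F t * polar s t Z) = sqnorm F t * (dotd t s Z *+ 2).
  by rewrite (lap_sqnormM_cross st) (lap_polar_cross ts) hL raddf0 addr0 dotdC.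
have L4 : lap s (sqnorm F s * (sqnorm F t * dotd t s Z)) =
    (sqnorm F t * dotd t s Z) *+ (2 * (m + 2 * p - 2)).
  apply: lap_sqnormM_harmonic.
  - by rewrite -[p.-1]add0n shomogM ?(shomog_sqnorm_cross st) ?(shomog_dotd st).
  - by move=> p0; rewrite (dotd_shomog0 st) ?mulr0 // -p0.
  - by rewrite (lap_sqnormM_cross st) dotd_comm hL raddf0 mulr0.
rewrite /cop_expansion !(raddfD, raddfN) /= !mul_mpolyC !linearZ /= -!mul_mpolyC.
rewrite -[sqnorm F s * sqnorm F t * _]mulrA L1 L2 L3 L4 !mulrN harm_denK.
by rewrite [(harm_den p)^-1%:MP * (_ * _)]mulrCA harm_denK; ring.
Qed.

End CExpansion.

Lemma cop_expansionC {F : numClosedFieldType} (m : nat) (s t : 'I_m -> 'I_(m + m)) p q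
  (Z : poly2 F m) : cop_expansion s t p q Z = cop_expansion t s q p Z.
Proof. by rewrite /cop_expansion (dotpC _ t) (dotdC t); ring. Qed.

Section ProjectedOperators.
Context {F : numClosedFieldType} (m : nat).
Local Notation P2 := (poly2 F m).
Local Notation xs := (@lshift m m).
Local Notation us := (@rshift m m).
Hypothesis m_gt4 : (4 < m)%N.
Let m_gt2 : (2 < m)%N. Proof. lia. Qed.
Let m_gt0 : (0 < m)%N. Proof. lia. Qed.
Let xu_disj := @lr_disjoint m.
Let ux_disj := disjoint_sidesC xu_disj.
Implicit Types Y Z : P2.

Lemma uxE : ux F m = dotp F us xs. Proof. by []. Qed.
Lemma udxE Z : udx Z = polar us xs Z. Proof. by []. Qed.

Lemma shomog_ux_x : shomog xs 1 (ux F m).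
Proof. by rewrite uxE dotpC (shomog_dotp xu_disj). Qed.

Lemma shomog_ux_u : shomog us 1 (ux F m).
Proof. exact: (shomog_dotp ux_disj). Qed.

Lemma Su_spec p q Z : shomog xs p Z -> shomog us q Z ->
  [/\ dharm (Su Z), shomog xs p.-1 (Su Z), shomog us q.+1 (Su Z)
    & sqnorm_ideal (udx Z - Su Z)].
Proof.
move=> hp hq.
exact: (pis_spec m_gt0 (shomog_polar xu_disj hp) (shomog_polar_cross ux_disj hq)).
Qed.

Lemma Cop_spec p q Z : shomog xs p Z -> shomog us q Z ->
  [/\ dharm (Cop Z), shomog xs p.+1 (Cop Z), shomog us q.+1 (Cop Z)
    & sqnorm_ideal (ux F m * Z - Cop Z)].
Proof.
move=> hp hq.
exact: (pis_spec m_gt0 (shomogM shomog_ux_x hp) (shomogM shomog_ux_u hq)).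
Qed.

Lemma CopZ p q c Z : shomog xs p Z -> shomog us q Z -> Cop (c *: Z) = c *: Cop Z.
Proof.
move=> hp hq; have [/dharmP[hx hu] _ _ hI] := Cop_spec hp hq.
have hcp := shomogM shomog_ux_x (shomogZ c hp); have hcq := shomogM shomog_ux_u (shomogZ c hq).
apply: (pis_unique m_gt0 hcp hcq).
  by apply/dharmP; rewrite !linearZ /= hx hu scaler0.
by rewrite -scalerAr -scalerBr; apply: sqnorm_idealZ.
Qed.

Lemma CopE p q Z : shomog xs p Z -> shomog us q Z -> dharm Z ->
  Cop Z = cop_expansion xs us p q Z.
Proof.
move=> hp hq /dharmP[hx hu].
apply: (pis_unique m_gt0 (shomogM shomog_ux_x hp) (shomogM shomog_ux_u hq)).
  apply/dharmP; split; first exact: (lap_cop_expansion m_gt2 xu_disj).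
  by rewrite cop_expansionC (lap_cop_expansion m_gt2 ux_disj).
rewrite /cop_expansion -uxE.
have -> : forall a b c d : P2, a - (a - b - c + d) = b + c - d by move=> *; ring.
apply: sqnorm_idealB; first apply: sqnorm_idealD.
- by rewrite mulrCA; apply: sqnorm_ideal_x.
- by rewrite mulrCA; apply: sqnorm_ideal_u.
- by rewrite -!mulrA; do 2 apply: sqnorm_idealM; apply: sqnorm_ideal_x.
Qed.

Definition su_cop_coef p : F := 1 - (harm_den m p)^-1 *+ 2.

Lemma Su_Cop p q Z : shomog xs p Z -> shomog us q Z -> dharm Z ->
  Su (Cop Z) = su_cop_coef p *: Cop (Su Z).
Proof.
move=> hp hq hZ.
have [_ hCp hCq _] := Cop_spec hp hq.
have [_ hSp hSq hSI] := Su_spec hp hq.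
have [/dharmP[hx hu] _ _ hCSI] := Cop_spec hSp hSq.
apply: (pis_unique m_gt0 (shomog_polar xu_disj hCp) (shomog_polar_cross ux_disj hCq)).
  by apply/dharmP; rewrite !linearZ /= hx hu !scaler0.
rewrite udxE in hSI *; rewrite uxE in hCSI.
pose a : P2 := (harm_den m p)^-1%:MP; pose b : P2 := (harm_den m q)^-1%:MP.
have -> : su_cop_coef p *: Cop (Su Z) = (1 - a *+ 2) * Cop (Su Z).
  by rewrite -mul_mpolyC rmorphB rmorph1 rmorphMn.
have -> : polar us xs (Cop Z) = sqnorm F us * Z + dotp F us xs * polar us xs Z
    - a * ((dotp F us xs * polar us xs Z) *+ 2
           + sqnorm F xs * polar us xs (polar us xs Z))
    - b * (sqnorm F us * polar us xs (polar xs us Z))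
    + a * (b * ((dotp F us xs * (sqnorm F us * dotd us xs Z)) *+ 2
                + sqnorm F xs * polar us xs (sqnorm F us * dotd us xs Z))).
  rewrite (CopE hp hq hZ) /cop_expansion !(raddfD, raddfN) /= !mul_mpolyC !linearZ /=.
  rewrite -!mul_mpolyC -/a -/b (polar_dotpM xu_disj) (polar_sqnormM xu_disj).
  by rewrite (polar_sqnormM_cross xu_disj) -mulrA (polar_sqnormM xu_disj); ring.
set D := dotp F us xs; set x0 := polar us xs Z; set x1 := polar us xs x0.
set x2 := polar us xs (polar xs us Z); set x3 := dotd us xs Z.
set x4 := polar us xs (sqnorm F us * x3).
(* Modulo the ideal, [polar us xs (Cop Z)] is [(1 - 2a) D x0], while [D x0] is
   congruent to [D (Su Z)], hence to [Cop (Su Z)]. *)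
have -> : sqnorm F us * Z + D * x0 - a * (D * x0 *+ 2 + sqnorm F xs * x1)
    - b * (sqnorm F us * x2) + a * (b * (D * (sqnorm F us * x3) *+ 2 + sqnorm F xs * x4))
    - (1 - a *+ 2) * Cop (Su Z)
  = sqnorm F xs * (a * (b * x4) - a * x1)
    + sqnorm F us * (Z - b * x2 + a * (b * (D * x3 *+ 2)))
    + (1 - a *+ 2) * (D * (x0 - Su Z)) + (1 - a *+ 2) * (D * Su Z - Cop (Su Z)).
  by ring.
apply: sqnorm_idealD; first apply: sqnorm_idealD; first apply: sqnorm_idealD.
- exact: sqnorm_ideal_x.
- exact: sqnorm_ideal_u.
- by do 2 apply: sqnorm_idealM.
- exact: sqnorm_idealM.
Qed.

Lemma iter_Cop_spec p q Z : shomog xs p Z -> shomog us q Z -> dharm Z -> forall i,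
  [/\ dharm (iter i (@Cop F m) Z), shomog xs (p + i) (iter i (@Cop F m) Z)
     & shomog us (q + i) (iter i (@Cop F m) Z)].
Proof.
move=> hp hq hZ; elim=> [|i [_ hip hiq]]; first by rewrite !addn0.
by have [? ? ? _] := Cop_spec hip hiq; rewrite !addnS.
Qed.

Lemma iter_Su_spec p q Z : shomog xs p Z -> shomog us q Z -> dharm Z -> forall j,
  [/\ dharm (iter j (@Su F m) Z), shomog xs (p - j) (iter j (@Su F m) Z)
     & shomog us (q + j) (iter j (@Su F m) Z)].
Proof.
move=> hp hq hZ; elim=> [|j [_ hjp hjq]]; first by rewrite subn0 addn0.
by have [? ? ? _] := Su_spec hjp hjq; rewrite subnS addnS.
Qed.

Lemma Su_iter_Cop p q Z : shomog xs p Z -> shomog us q Z -> dharm Z -> forall i,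
  Su (iter i (@Cop F m) Z) =
    (\prod_(k < i) su_cop_coef (p + k)) *: iter i (@Cop F m) (Su Z).
Proof.
move=> hp hq hZ; have [hS hSp hSq _] := Su_spec hp hq.
elim=> [|i IHi]; first by rewrite big_ord0 scale1r.
have [hiZ hip hiq] := iter_Cop_spec hp hq hZ i.
have [_ hiSp hiSq] := iter_Cop_spec hSp hSq hS i.
by rewrite /= (Su_Cop hip hiq hiZ) IHi (CopZ _ hiSp hiSq) scalerA big_ord_recr /= mulrC.
Qed.

Lemma su_cop_coefE p : su_cop_coef p = (harm_den m p - 2) / harm_den m p.
Proof. by have := harm_den_neq0 (F := F) m_gt2 p; rewrite /su_cop_coef => ?; field. Qed.

Lemma harm_den_sub2_neq0 p : harm_den m p - 2 != 0 :> F.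
Proof.
rewrite /harm_den -natrB; last by lia.
by rewrite pnatr_eq0; apply/eqP; lia.
Qed.

Lemma prod_su_cop_coef p i :
  \prod_(k < i) su_cop_coef (p + k) = (harm_den m p - 2) / (harm_den m (p + i) - 2).
Proof.
elim: i => [|i IHi]; first by rewrite big_ord0 addn0 divff ?harm_den_sub2_neq0.
have -> : harm_den m (p + i.+1) - 2 = harm_den m (p + i) :> F.
  by rewrite /harm_den -natrB; [congr _%:R | ]; lia.
rewrite big_ord_recr /= IHi su_cop_coefE.
have := harm_den_neq0 (F := F) m_gt2 (p + i); have := harm_den_sub2_neq0 (p + i).
by move=> *; field; apply/andP.
Qed.

Lemma harm_denD p i : harm_den m (p + i) = harm_den m p + 2 * i%:R :> F.
Proof. by rewrite /harm_den -natrM -natrD; congr _%:R; lia. Qed.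

Lemma Hx_eig_harm_den n : Hx_eig F m (n%:Z - 1) = - harm_den m n / 2.
Proof.
rewrite /Hx_eig /harm_den intrB -pmulrn natrB ?natrD ?natrM; last by lia.
by field.
Qed.

Lemma prod_su_cop_coef_Hx p i : \prod_(k < i) su_cop_coef (p + k) =
  (Hx_eig F m ((p + i)%:Z - 1) + i.+1%:R) / (Hx_eig F m ((p + i)%:Z - 1) + 1).
Proof.
rewrite prod_su_cop_coef Hx_eig_harm_den !harm_denD -natr1.
have := harm_den_sub2_neq0 (p + i); rewrite harm_denD => h.
by field; rewrite addrC -opprB oppr_eq0 h.
Qed.

End ProjectedOperators.

Unset Implicit Arguments.
Set Strict Implicit.

Theorem proposition4p1 (F : numClosedFieldType) (m : nat) (hm : (4 < m)%N)
  (k l : nat) (hkl : (l <= k)%N) (H : poly2 F m) (hH : Hkl k l H)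
  (i j : nat) (hj : (j <= k - l)%N) :
  let P := iter i (@Cop F m) (iter j (@Su F m) H) in
  let hx := Hx_eig F m ((k + i)%:Z - (j.+1)%:Z) in
  Cop P = iter i.+1 (@Cop F m) (iter j (@Su F m) H) /\
  Su P = ((hx + i.+1%:R) / (hx + 1)) *: iter i (@Cop F m) (iter j.+1 (@Su F m) H).
Proof.
move=> P eig; split; first by [].
case: hH; rewrite bihomogE => /andP[Hk Hl] [Hx [Hu _]].
have [Sh Shk Shl] := iter_Su_spec hm Hk Hl (conj Hx Hu) j.
rewrite /P (Su_iter_Cop hm Shk Shl Sh) /eig.
have -> : ((k + i)%:Z - j.+1%:Z = (k - j + i)%:Z - 1)%R by lia.
by rewrite prod_su_cop_coef_Hx.
Qed.
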